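(* Consider the Single TFM with split parameter $z\in(0,1)$, all transactions of common size $s>0$, history $H$ with burning fee $r$, and a set $M_0$ of user transactions with $|M_0|=w>c_{block}$. Suppose all includers and the block producer follow the indicated allocation rules and add no fake transactions, producing block $B_k$. Then for every $t\in M_0\setminus B_k$ there is a bid $c'_t$ for $t$ such that, with all other transactions and bids unchanged and all parties following the indicated allocation rules without fake transactions, $t$ is included in at least one inclusion list and in the block.
   Context: Model: in one slot there are users, $m$ includers with distinct orders $1,\dots,m$ (order $1$ best), and one block producer. Each transaction has size $s$. Includers choose inclusion lists (at most $c_{Incl}$ transactions each); the block producer, seeing them, builds a block (at most $c_{block}$ transactions). Each transaction in the block pays burning fee $rs$. Block producer cost $\mu^{Cost}_{BP}\ge0$ and includer cost $\mu^{Cost}_{CM}\ge0$ per unit of size per included user transaction. Single TFM: the bid is a single nonnegative number $c_t$. Block producer fee $=\max\{\min\{\mu^{Cost}_{BP}s,\ c_ts-rs\}+\max\{c_ts-rs-\mu^{Cost}_{BP}s,0\}(1-z),\ 0\}$, paid when $t$ is in the block. Committee fee $=\max\{c_ts-rs-\mu^{Cost}_{BP}s,0\}\cdot z$, paid to the smallest-order includer listing $t$, only if $t$ is in the block. Indicated allocation rules. Block producer: among transactions with $c_t\ge r+\mu^{Cost}_{BP}$, include those with highest block producer fee (deterministic tie-breaking) until full. Includer of order $j$: compute the set $S$ the block producer would include; discard those with committee fee below $\mu^{Cost}_{CM}s$; sort the rest by committee fee decreasingly (deterministic tie-breaking); includer $j$ takes positions $(j-1)c_{Incl}+1,\dots,jc_{Incl}$.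 *)

From HB Require Import structures.
From mathcomp Require Import all_boot all_order all_algebra.
Set Implicit Arguments. Unset Strict Implicit. Unset Printing Implicit Defensive.
Import Order.TTheory GRing.Theory Num.Theory.
Local Open Scope ring_scope.

Section SingleTFM.
Variable R : realFieldType.

Definition feeBP (s r muBP z c : R) : R :=
  Num.max (Num.min (muBP * s) (c * s - r * s)
           + Num.max (c * s - r * s - muBP * s) 0 * (1 - z)) 0.

Definition feeCM (s r muBP z c : R) : R :=
  Num.max (c * s - r * s - muBP * s) 0 * z.

Variable T : finType.

Definition before (f : T -> R) (tb : T -> nat) : rel T :=
  fun x y => (f y < f x) || ((f x == f y) && (tb x <= tb y)%N).

Definition bp_list (s r muBP z : R) (cblock : nat) (tbBP : T -> nat)
  (M0 : {set T}) (c : T -> R) : seq T :=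
  take cblock
    (sort (before (fun u => feeBP s r muBP z (c u)) tbBP)
          [seq u <- enum M0 | r + muBP <= c u]).

Definition block (s r muBP z : R) (cblock : nat) (tbBP : T -> nat)
  (M0 : {set T}) (c : T -> R) : {set T} :=
  [set u in bp_list s r muBP z cblock tbBP M0 c].

(* Indicated includer rule; includer j : 'I_m has order j+1 and takes
   positions j*cIncl+1, ..., (j+1)*cIncl of the sorted list. *)
Definition incl_list (s r muBP muCM z : R) (cblock cIncl : nat)
  (tbBP tbCM : T -> nat) (M0 : {set T}) (c : T -> R) (j : nat) : seq T :=
  take cIncl (drop (j * cIncl)
    (sort (before (fun u => feeCM s r muBP z (c u)) tbCM)
      [seq u <- bp_list s r muBP z cblock tbBP M0 c
         | muCM * s <= feeCM s r muBP z (c u)])).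

Definition upd_bid (c : T -> R) (t : T) (b : R) : T -> R :=
  fun u => if u == t then b else c u.

End SingleTFM.

From HB Require Import structures.
From mathcomp Require Import all_boot all_order all_algebra.
From mathcomp Require Import lra.
Set Implicit Arguments. Unset Strict Implicit. Unset Printing Implicit Defensive.
Import Order.TTheory GRing.Theory Num.Theory.
Local Open Scope ring_scope.

(* Raising the bid of [t] above every other bid and above [r + muBP + muCM / z]
   makes [t] the strict maximum of both the block producer fee and the
   committee fee, with a committee fee covering the includer cost.  A strict
   maximum heads every sorted list it belongs to, so [t] is taken by the block
   producer and by the includer of order 1. *)

Lemma feeBP_above (R : realFieldType) (s r muBP z c : R) :
  z < 1 -> 0 < s -> 0 <= muBP -> r + muBP <= c ->
  feeBP s r muBP z c = muBP * s + (c * s - r * s - muBP * s) * (1 - z).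
Proof.
move=> z_lt1 s_gt0 muBP_ge0 hc.
have hd : 0 <= c - r - muBP by lra.
have := mulr_ge0 hd (ltW s_gt0); rewrite !mulrBl => d_ge0.
have a_ge0 := mulr_ge0 muBP_ge0 (ltW s_gt0).
have e_ge0 : 0 <= (c * s - r * s - muBP * s) * (1 - z).
  by apply: mulr_ge0 d_ge0 _; rewrite subr_ge0 ltW.
rewrite /feeBP (min_l (x := muBP * s)); last lra.
by rewrite (max_l (x := c * s - r * s - muBP * s)) // max_l; lra.
Qed.

Lemma feeBP_below (R : realFieldType) (s r muBP z c : R) :
  0 < s -> 0 <= muBP -> c <= r + muBP -> feeBP s r muBP z c <= muBP * s.
Proof.
move=> s_gt0 muBP_ge0 hc.
have hd : c - r - muBP <= 0 by lra.
have := mulr_le0_ge0 hd (ltW s_gt0); rewrite !mulrBl => d_le0.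
have a_ge0 := mulr_ge0 muBP_ge0 (ltW s_gt0).
rewrite /feeBP (min_r (y := c * s - r * s)); last lra.
rewrite (max_r (x := c * s - r * s - muBP * s)) // mul0r addr0.
by rewrite ge_max a_ge0 andbT; lra.
Qed.

Lemma feeBP_lt (R : realFieldType) (s r muBP z c1 c2 : R) :
  0 < z < 1 -> 0 < s -> 0 <= muBP -> c1 < c2 -> r + muBP < c2 ->
  feeBP s r muBP z c1 < feeBP s r muBP z c2.
Proof.
move=> /andP[z_gt0 z_lt1] s_gt0 muBP_ge0 c12 hc2.
have hz : 0 < 1 - z by lra.
have hs : c1 * s < c2 * s by rewrite ltr_pM2r.
rewrite (feeBP_above z_lt1 s_gt0 muBP_ge0 (ltW hc2)).
have [hc1|hc1] := lerP (r + muBP) c1.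
  by rewrite feeBP_above // ltrD2l (ltr_pM2r hz); lra.
have e_gt0 : 0 < (c2 * s - r * s - muBP * s) * (1 - z).
  by apply: mulr_gt0 hz; rewrite -!mulrBl; apply: mulr_gt0 s_gt0; lra.
by apply: le_lt_trans (feeBP_below _ _ _ (ltW hc1)) _ => //; lra.
Qed.

Lemma feeCM_lt (R : realFieldType) (s r muBP z c1 c2 : R) :
  0 < z -> 0 < s -> c1 < c2 -> r + muBP < c2 ->
  feeCM s r muBP z c1 < feeCM s r muBP z c2.
Proof.
move=> z_gt0 s_gt0 c12 hc2.
have hs : c1 * s < c2 * s by rewrite ltr_pM2r.
have hd : 0 < c2 - r - muBP by lra.
have := mulr_gt0 hd s_gt0; rewrite !mulrBl => d_gt0.
rewrite /feeCM (max_l (x := c2 * s - r * s - muBP * s)); last exact: ltW.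
by rewrite ltr_pM2r // gt_max d_gt0 andbT; lra.
Qed.

Lemma cost_le_feeCM (R : realFieldType) (s r muBP muCM z c : R) :
  0 < z -> 0 < s -> r + muBP + muCM / z <= c ->
  muCM * s <= feeCM s r muBP z c.
Proof.
move=> z_gt0 s_gt0 hc.
have -> : muCM * s = muCM / z * s * z by rewrite mulrAC divfK // gt_eqF.
rewrite /feeCM ler_pM2r // le_max -!mulrBl ler_pM2r //.
by apply/orP; left; lra.
Qed.

Section SortBefore.
Variables (R : realFieldType) (T : finType) (f : T -> R) (tb : T -> nat).

Lemma before_total : total (before f tb).
Proof.
move=> x y; rewrite /before.
by case: (ltrgtP (f x) (f y)) => //= _; exact: leq_total.
Qed.

Lemma before_trans : transitive (before f tb).
Proof.
move=> y x w; rewrite /before.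
move=> /orP[h1|/andP[/eqP h1 h1']] /orP[h2|/andP[/eqP h2 h2']].
- by rewrite (lt_trans h2 h1).
- by rewrite -h2 h1.
- by rewrite h1 h2.
- by rewrite h1 h2 eqxx (leq_trans h1' h2') orbT.
Qed.

Lemma mem_take_sort_before_max (xs : seq T) t k : (0 < k)%N -> t \in xs ->
  {in xs, forall u, u != t -> f u < f t} ->
  t \in take k (sort (before f tb) xs).
Proof.
move=> k_gt0 t_xs t_max; have := sort_sorted before_total xs.
have := mem_sort (before f tb) xs; case: (sort _ xs) => [|h rest] mem_xs.
  by move: t_xs; rewrite -mem_xs.
case: k k_gt0 => // k _ sorted_xs /=; rewrite in_cons.
have [//|h_neq_t] := eqVneq t h.
have t_rest : t \in rest by move: t_xs; rewrite -mem_xs in_cons (negPf h_neq_t).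
have := allP (order_path_min before_trans sorted_xs) t t_rest.
have h_xs : h \in xs by rewrite -mem_xs mem_head.
have lt_ht : f h < f t by apply: t_max; rewrite // eq_sym.
by rewrite /before ltNge (ltW lt_ht) (lt_eqF lt_ht).
Qed.

End SortBefore.

Section TopBid.
Variables (R : realFieldType) (T : finType) (s r muBP muCM z : R).
Variables (cIncl cblock : nat) (tbBP tbCM : T -> nat) (M0 : {set T}).

Lemma mem_bp_list_max (c : T -> R) t : (0 < cblock)%N -> t \in M0 ->
  r + muBP <= c t ->
  (forall u, u != t -> feeBP s r muBP z (c u) < feeBP s r muBP z (c t)) ->
  t \in bp_list s r muBP z cblock tbBP M0 c.
Proof.
move=> cblock_gt0 t_M0 t_thr t_max.
apply: mem_take_sort_before_max => // [|u _]; last exact: t_max.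
by rewrite mem_filter mem_enum t_M0 t_thr.
Qed.

Lemma mem_incl_list_max (c : T -> R) t : (0 < cIncl)%N ->
  t \in bp_list s r muBP z cblock tbBP M0 c ->
  muCM * s <= feeCM s r muBP z (c t) ->
  (forall u, u != t -> feeCM s r muBP z (c u) < feeCM s r muBP z (c t)) ->
  t \in incl_list s r muBP muCM z cblock cIncl tbBP tbCM M0 c 0.
Proof.
move=> cIncl_gt0 t_bp t_cover t_max; rewrite /incl_list mul0n drop0.
apply: mem_take_sort_before_max => // [|u _]; last exact: t_max.
by rewrite mem_filter t_cover.
Qed.

Lemma upd_bid_top_included (c : T -> R) t b :
  0 < z < 1 -> 0 < s -> 0 <= muBP ->
  (0 < cIncl)%N -> (0 < cblock)%N -> t \in M0 ->
  (forall u, u != t -> c u < b) -> r + muBP < b -> r + muBP + muCM / z <= b ->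
  let c' := upd_bid c t b in
  t \in incl_list s r muBP muCM z cblock cIncl tbBP tbCM M0 c' 0 /\
  t \in bp_list s r muBP z cblock tbBP M0 c'.
Proof.
move=> z01 s_gt0 muBP_ge0 cIncl_gt0 cblock_gt0 t_M0 b_max b_thr b_cover c'.
have /andP[z_gt0 _] := z01.
have c't : c' t = b by rewrite /c' /upd_bid eqxx.
have c'_lt u : u != t -> c' u < b.
  by move=> ut; rewrite /c' /upd_bid (negPf ut) b_max.
have t_bp : t \in bp_list s r muBP z cblock tbBP M0 c'.
  apply: mem_bp_list_max; rewrite ?c't ?(ltW b_thr) // => u /c'_lt ut.
  exact: feeBP_lt.
split=> //; apply: mem_incl_list_max; rewrite ?c't ?cost_le_feeCM // => u /c'_lt ut.
exact: feeCM_lt.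
Qed.

End TopBid.

Theorem mainTheorem4 (R : realFieldType) (T : finType)
  (s r muBP muCM z : R) (m cIncl cblock : nat)
  (tbBP tbCM : T -> nat) (M0 : {set T}) (c : T -> R) :
  0 < z < 1 -> 0 < s -> 0 <= muBP -> 0 <= muCM ->
  (0 < m)%N -> (0 < cIncl)%N -> (0 < cblock)%N ->
  injective tbBP -> injective tbCM ->
  (forall u, u \in M0 -> 0 <= c u) ->
  (cblock < #|M0|)%N ->
  forall t, t \in M0 :\: block s r muBP z cblock tbBP M0 c ->
  exists c't : R, 0 <= c't /\
    let c' := upd_bid c t c't in
    (exists j : 'I_m,
       t \in incl_list s r muBP muCM z cblock cIncl tbBP tbCM M0 c' j) /\
    t \in block s r muBP z cblock tbBP M0 c'.
Proof.
move=> z01 s_gt0 muBP_ge0 muCM_ge0 m_gt0 cIncl_gt0 cblock_gt0 _ _ _ _ t.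
rewrite inE => /andP[_ t_M0]; have /andP[z_gt0 _] := z01.
set S := \sum_u `|c u|.
have S_ge0 : 0 <= S by apply: sumr_ge0 => u _.
have c_le_S u : c u <= S.
  by rewrite (le_trans (ler_norm _)) // /S (bigD1 u) //= lerDl sumr_ge0.
have q_ge0 : 0 <= muCM / z by apply: divr_ge0; lra.
have r_le := ler_norm r; have r_ge0 := normr_ge0 r.
pose b := 1 + `|r| + muBP + muCM / z + S.
have b_thr : r + muBP < b by rewrite /b; lra.
have b_cover : r + muBP + muCM / z <= b by rewrite /b; lra.
have b_max u : u != t -> c u < b by move=> _; have := c_le_S u; rewrite /b; lra.
exists b; split; first by rewrite /b; lra.
have [t_incl t_bp] := upd_bid_top_included tbBP tbCM z01 s_gt0 muBP_ge0 cIncl_gt0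
  cblock_gt0 t_M0 b_max b_thr b_cover.
by split; [exists (Ordinal m_gt0) | rewrite inE].
Qed.
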